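(* Let $\mathbb O'_+=\{x\in\mathbb O':|x|^2>0\}$ and $\mathcal U=U_1\cup U_2\cup U_3\subset\mathbb O'^3$ with $U_1=\{(1,y,z):1+|y|^2+|z|^2>0\}$, $U_2=\{(x,1,z):|x|^2+1+|z|^2>0\}$, $U_3=\{(x,y,1):|x|^2+|y|^2+1>0\}$. The relation on $\mathcal U$ given by $[a,b,c]\sim[d,e,f]$ iff there exists $\lambda\in\mathbb O'_+$ with $a=d\lambda$, $b=e\lambda$, $c=f\lambda$ is an equivalence relation.
   Context: The para-octonions $\mathbb O'$ are $\mathbb H\oplus\mathbb H$ with multiplication $(q_1,q_2)(p_1,p_2)=(q_1p_1+\bar p_2q_2,\ p_2q_1+q_2\bar p_1)$, unit $(1,0)$, conjugation $\overline{(q_1,q_2)}=(\bar q_1,-q_2)$, inner product $\langle a,b\rangle=\mathrm{Re}(a\bar b)$ (real part of the first quaternion component) and $|a|^2=\langle a,a\rangle=|q_1|^2-|q_2|^2$ for $a=(q_1,q_2)$; this form has signature $(4,4)$ and satisfies $|ab|^2=|a|^2|b|^2$. *)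

From Stdlib Require Import Reals.
Open Scope R_scope.

Record quat : Type := Quat { qa : R; qb : R; qc : R; qd : R }.

Definition qadd (p q : quat) : quat :=
  Quat (qa p + qa q) (qb p + qb q) (qc p + qc q) (qd p + qd q).

Definition qmul (p q : quat) : quat :=
  Quat (qa p * qa q - qb p * qb q - qc p * qc q - qd p * qd q)
       (qa p * qb q + qb p * qa q + qc p * qd q - qd p * qc q)
       (qa p * qc q - qb p * qd q + qc p * qa q + qd p * qb q)
       (qa p * qd q + qb p * qc q - qc p * qb q + qd p * qa q).

Definition qconj (p : quat) : quat := Quat (qa p) (- qb p) (- qc p) (- qd p).
Definition qopp (p : quat) : quat := Quat (- qa p) (- qb p) (- qc p) (- qd p).
Definition qre (p : quat) : R := qa p.
Definition qone : quat := Quat 1 0 0 0.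
Definition qzero : quat := Quat 0 0 0 0.

(** Para-octonions O' = H (+) H. *)
Record poct : Type := POct { pf : quat; ps : quat }.

Definition omul (x y : poct) : poct :=
  POct (qadd (qmul (pf x) (pf y)) (qmul (qconj (ps y)) (ps x)))
       (qadd (qmul (ps y) (pf x)) (qmul (ps x) (qconj (pf y)))).

Definition oone : poct := POct qone qzero.

Definition oconj (x : poct) : poct := POct (qconj (pf x)) (qopp (ps x)).

Definition oinner (a b : poct) : R := qre (pf (omul a (oconj b))).

(** |a|^2 = <a,a>  (= |q1|^2 - |q2|^2). *)
Definition onorm2 (a : poct) : R := oinner a a.

Definition opos (l : poct) : Prop := 0 < onorm2 l.

Definition U1 (t : poct * poct * poct) : Prop :=
  let '(x, y, z) := t in x = oone /\ 1 + onorm2 y + onorm2 z > 0.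
Definition U2 (t : poct * poct * poct) : Prop :=
  let '(x, y, z) := t in y = oone /\ onorm2 x + 1 + onorm2 z > 0.
Definition U3 (t : poct * poct * poct) : Prop :=
  let '(x, y, z) := t in z = oone /\ onorm2 x + onorm2 y + 1 > 0.

Definition Uset (t : poct * poct * poct) : Prop := U1 t \/ U2 t \/ U3 t.

Definition prel (t s : poct * poct * poct) : Prop :=
  let '(a, b, c) := t in let '(d, e, f) := s in
  exists l : poct, opos l /\ a = omul d l /\ b = omul e l /\ c = omul f l.

(** The para-octonions are the split octonions: an alternative
    composition algebra with [(x y) conj y = |y|^2 x] and [conj y (y x) = |y|^2 x].
    Hence every [l] with [|l|^2 <> 0] has the inverse
    [conj l / |l|^2], and an equation [x y = 1] already forces [x] resp. [y]
    to be that inverse.  For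
    transitivity, [t = s l] and [s = u m] give [t = (u m) l], and the
    algebra is not associative; but each of [u], [u m] and [(u m) l] has an
    entry equal to [1], and a product [(x m) l] associates as soon as [x],
    [x m] or [(x m) l] equals [1].  A coincidence of two of these positions
    forces [m = 1], [l = 1] or [m l = 1], which makes every entry associate;
    otherwise they cover all three entries. *)
From Stdlib Require Import Reals Lra.
Open Scope R_scope.

Definition qscale (c : R) (p : quat) : quat :=
  Quat (c * qa p) (c * qb p) (c * qc p) (c * qd p).

Definition oscale (c : R) (x : poct) : poct :=
  POct (qscale c (pf x)) (qscale c (ps x)).

Definition oinv (x : poct) : poct := oscale (/ onorm2 x) (oconj x).

Lemma quat_ext (p q : quat) :
  qa p = qa q -> qb p = qb q -> qc p = qc q -> qd p = qd q -> p = q.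
Proof. destruct p, q; simpl; intros; subst; reflexivity. Qed.

Lemma poct_ext (x y : poct) : pf x = pf y -> ps x = ps y -> x = y.
Proof. destruct x, y; simpl; intros; subst; reflexivity. Qed.

Ltac poct_unfold :=
  cbv beta iota delta [omul qadd qmul qconj oconj qopp oscale qscale onorm2
                       oinner qre oone qone qzero pf ps qa qb qc qd].

Ltac poct_ring :=
  repeat match goal with x : poct |- _ => destruct x as [[] []] end;
  first [ apply poct_ext; apply quat_ext | idtac ]; poct_unfold; ring.

Lemma omul1o (x : poct) : omul oone x = x.
Proof. poct_ring. Qed.

Lemma omulo1 (x : poct) : omul x oone = x.
Proof. poct_ring. Qed.

Lemma omul_mulr_conj (x y : poct) :
  omul (omul x y) (oconj y) = oscale (onorm2 y) x.
Proof. poct_ring. Qed.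

Lemma omul_conj_mull (x y : poct) :
  omul (oconj y) (omul y x) = oscale (onorm2 y) x.
Proof. poct_ring. Qed.

Lemma oconj_mul (x y : poct) : oconj (omul x y) = omul (oconj y) (oconj x).
Proof. poct_ring. Qed.

Lemma onorm2_mul (x y : poct) : onorm2 (omul x y) = onorm2 x * onorm2 y.
Proof. poct_ring. Qed.

Lemma onorm2_conj (x : poct) : onorm2 (oconj x) = onorm2 x.
Proof. poct_ring. Qed.

Lemma onorm2_scale (c : R) (x : poct) : onorm2 (oscale c x) = c * c * onorm2 x.
Proof. poct_ring. Qed.

Lemma onorm2_one : onorm2 oone = 1.
Proof. poct_ring. Qed.

Lemma omulZl (c : R) (x y : poct) : omul (oscale c x) y = oscale c (omul x y).
Proof. poct_ring. Qed.

Lemma omulZr (c : R) (x y : poct) : omul x (oscale c y) = oscale c (omul x y).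
Proof. poct_ring. Qed.

Lemma oscaleA (a b : R) (x : poct) : oscale a (oscale b x) = oscale (a * b) x.
Proof. poct_ring. Qed.

Lemma oscale1 (x : poct) : oscale 1 x = x.
Proof. poct_ring. Qed.

Section Inverse.

Variable y : poct.
Hypothesis y_invertible : onorm2 y <> 0.

Lemma omulK (x : poct) : omul (omul x y) (oinv y) = x.
Proof.
  unfold oinv. rewrite omulZr, omul_mulr_conj, oscaleA, Rinv_l by exact y_invertible.
  apply oscale1.
Qed.

Lemma omulKl (x : poct) : omul (oinv y) (omul y x) = x.
Proof.
  unfold oinv. rewrite omulZl, omul_conj_mull, oscaleA, Rinv_l by exact y_invertible.
  apply oscale1.
Qed.

Lemma omulVo : omul (oinv y) y = oone.
Proof. rewrite <- (omulo1 y) at 2. apply omulKl. Qed.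

Lemma omul_eq1_invl (x : poct) : omul x y = oone -> x = oinv y.
Proof. intro Hxy. rewrite <- (omulK x), Hxy. apply omul1o. Qed.

Lemma omul_eq1_invr (z : poct) : omul y z = oone -> z = oinv y.
Proof. intro Hyz. rewrite <- (omulKl z), Hyz. apply omulo1. Qed.

Lemma onorm2_inv : onorm2 (oinv y) = / onorm2 y.
Proof. unfold oinv. rewrite onorm2_scale, onorm2_conj. field. exact y_invertible. Qed.

End Inverse.

Lemma oinv_mul (x y : poct) :
  onorm2 x <> 0 -> onorm2 y <> 0 -> oinv (omul x y) = omul (oinv y) (oinv x).
Proof.
  intros Hx Hy. unfold oinv.
  rewrite omulZl, omulZr, oscaleA, oconj_mul, onorm2_mul, Rinv_mult, Rmult_comm.
  reflexivity.
Qed.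

Definition associative_at (x y z : poct) : Prop :=
  omul (omul x y) z = omul x (omul y z).

Lemma associative_at_1l (y z : poct) : associative_at oone y z.
Proof. unfold associative_at. rewrite !omul1o. reflexivity. Qed.

Lemma associative_at_1m (x z : poct) : associative_at x oone z.
Proof. unfold associative_at. rewrite omulo1, omul1o. reflexivity. Qed.

Lemma associative_at_1r (x y : poct) : associative_at x y oone.
Proof. unfold associative_at. rewrite !omulo1. reflexivity. Qed.

Lemma associative_at_mull_eq1 (x y z : poct) :
  onorm2 y <> 0 -> omul x y = oone -> associative_at x y z.
Proof.
  intros Hy Hxy. unfold associative_at.
  rewrite Hxy, omul1o, (omul_eq1_invl y Hy x Hxy), omulKl by exact Hy.
  reflexivity.
Qed.

Lemma associative_at_mulr_eq1 (x y z : poct) :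
  onorm2 y <> 0 -> omul y z = oone -> associative_at x y z.
Proof.
  intros Hy Hyz. unfold associative_at.
  rewrite Hyz, omulo1, (omul_eq1_invr y Hy z Hyz), omulK by exact Hy.
  reflexivity.
Qed.

Lemma associative_at_mul3_eq1 (x y z : poct) :
  onorm2 y <> 0 -> onorm2 z <> 0 -> omul (omul x y) z = oone ->
  associative_at x y z.
Proof.
  intros Hy Hz Hxyz. unfold associative_at.
  assert (Hyz : onorm2 (omul y z) <> 0).
  { rewrite onorm2_mul. now apply Rmult_integral_contrapositive. }
  assert (Hx : x = oinv (omul y z)).
  { rewrite <- (omulK y Hy x), (omul_eq1_invl z Hz _ Hxyz).
    symmetry. now apply oinv_mul. }
  rewrite Hxyz, Hx, omulVo by exact Hyz.
  reflexivity.
Qed.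

Lemma associative_at_of_unit (x y z : poct) :
  onorm2 y <> 0 -> onorm2 z <> 0 ->
  x = oone \/ omul x y = oone \/ omul (omul x y) z = oone ->
  associative_at x y z.
Proof.
  intros Hy Hz [Hx | [Hxy | Hxyz]].
  - subst x. apply associative_at_1l.
  - now apply associative_at_mull_eq1.
  - now apply associative_at_mul3_eq1.
Qed.

Lemma associative_at_of_unit_collision (x y z : poct) :
  onorm2 y <> 0 ->
  (x = oone /\ omul x y = oone) \/
  (omul x y = oone /\ omul (omul x y) z = oone) \/
  (x = oone /\ omul (omul x y) z = oone) ->
  forall w, associative_at w y z.
Proof.
  intros Hy [[Hx Hxy] | [[Hxy Hxyz] | [Hx Hxyz]]] w.
  - rewrite Hx, omul1o in Hxy. subst y. apply associative_at_1m.
  - rewrite Hxy, omul1o in Hxyz. subst z. apply associative_at_1r.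
  - rewrite Hx, omul1o in Hxyz. now apply associative_at_mulr_eq1.
Qed.

Definition has_unit_entry (t : poct * poct * poct) : Prop :=
  let '(x, y, z) := t in x = oone \/ y = oone \/ z = oone.

Lemma Uset_has_unit_entry (t : poct * poct * poct) : Uset t -> has_unit_entry t.
Proof. destruct t as [[x y] z]. unfold Uset, U1, U2, U3, has_unit_entry. tauto. Qed.

Lemma associative_at_entries (g h k m l : poct) :
  onorm2 m <> 0 -> onorm2 l <> 0 ->
  has_unit_entry (g, h, k) ->
  has_unit_entry (omul g m, omul h m, omul k m) ->
  has_unit_entry (omul (omul g m) l, omul (omul h m) l, omul (omul k m) l) ->
  associative_at g m l /\ associative_at h m l /\ associative_at k m l.
Proof.
  intros Hm Hl [Hg | [Hh | Hk]] [Hgm | [Hhm | Hkm]] [Hgml | [Hhml | Hkml]];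
  repeat split;
  first [ apply associative_at_of_unit; [assumption | assumption | tauto]
        | apply (associative_at_of_unit_collision g); [assumption | tauto]
        | apply (associative_at_of_unit_collision h); [assumption | tauto]
        | apply (associative_at_of_unit_collision k); [assumption | tauto] ].
Qed.

Lemma opos_inv (l : poct) : opos l -> opos (oinv l).
Proof.
  unfold opos. intro Hl. rewrite onorm2_inv by lra. now apply Rinv_0_lt_compat.
Qed.

Lemma opos_mul (x y : poct) : opos x -> opos y -> opos (omul x y).
Proof. unfold opos. rewrite onorm2_mul. apply Rmult_lt_0_compat. Qed.

Lemma prel_refl (t : poct * poct * poct) : prel t t.
Proof.
  destruct t as [[a b] c]. exists oone.
  unfold opos. rewrite onorm2_one, !omulo1. repeat split. lra.
Qed.

Lemma prel_sym (t s : poct * poct * poct) : prel t s -> prel s t.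
Proof.
  destruct t as [[a b] c], s as [[d e] f].
  intros [l [Hl [Ha [Hb Hc]]]]. subst a b c.
  assert (Hl0 : onorm2 l <> 0) by (unfold opos in Hl; lra).
  exists (oinv l). rewrite !omulK by exact Hl0.
  repeat split. now apply opos_inv.
Qed.

Lemma prel_trans (t s u : poct * poct * poct) :
  has_unit_entry t -> has_unit_entry s -> has_unit_entry u ->
  prel t s -> prel s u -> prel t u.
Proof.
  destruct t as [[a b] c], s as [[d e] f], u as [[g h] k].
  intros Ht Hs Hu [l [Hl [Ha [Hb Hc]]]] [m [Hm [Hd [He Hf]]]].
  subst a b c d e f.
  exists (omul m l). split; [now apply opos_mul |].
  apply associative_at_entries; unfold opos in *; (lra || assumption).
Qed.

Theorem lemma6p1 :
  (forall t, Uset t -> prel t t) /\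
  (forall t s, Uset t -> Uset s -> prel t s -> prel s t) /\
  (forall t s u, Uset t -> Uset s -> Uset u -> prel t s -> prel s u -> prel t u).
Proof.
  split; [| split].
  - intros t _. apply prel_refl.
  - intros t s _ _. apply prel_sym.
  - intros t s u Ht Hs Hu.
    apply prel_trans; now apply Uset_has_unit_entry.
Qed.
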